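(* Let $n\ge2$, $l\ge1$, $\mathfrak g=D^{(2)}_{n+1}$, $B$ the level-$l$ perfect crystal of the context, $\lambda=l\Lambda_0$, $d=2n$, and $i^{(j)}_a=a-1$ for $1\le a\le n+1$, $i^{(j)}_a=2n+1-a$ for $n+2\le a\le 2n$ (all $j\ge1$). Then: (II) $B^{(j)}_d=B$ for all $j\ge1$; (III) $\langle\lambda_j,h_{i^{(j)}_a}\rangle\le\varepsilon_{i^{(j)}_a}(b)$ for all $j\ge1$, $1\le a\le d$, $b\in B^{(j)}_{a-1}$; (IV') for all $j\ge1$, $a=1,\dots,d$: $\varepsilon_{i^{(j)}_{a+1}}(b^{(j)}_a)=0$, $\varphi_{i^{(j)}_{a+1}}(b^{(j)}_a)>0$ (with $i^{(j)}_{d+1}:=i^{(j+1)}_1$), and $b^{(j+1)}_0=\tilde f_{i^{(j+1)}_1}^mb^{(j)}_d$ with $m=\langle\lambda_{j+1},h_{i^{(j+1)}_1}\rangle$. Moreover $B^{(j)}_0=\{(0,\dots,0)\}$, $B^{(j)}_{2n}=B$; for $1\le a\le n$, $B^{(j)}_a$ is the set of $b\in B$ with all coordinates $0$ except possibly $x_1,\dots,x_a$; for $1\le a\le n-1$, $B^{(j)}_{n+a}$ is the set of $b\in B$ with all coordinates $0$ except possibly $x_1,\dots,x_n,x_0,\bar x_n,\dots,\bar x_{n-a+1}$. Also $b^{(j)}_0=(0,\dots,0)$, and for $1\le a\le n$, $b^{(j)}_a$ has $x_a=l$ and $b^{(j)}_{n+a}$ has $\bar x_{n-a+1}=l$, all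 other coordinates $0$.
   Context: $(x)_+=\max(x,0)$. $B=\{(x_1,\dots,x_n,x_0,\bar x_n,\dots,\bar x_1)\in\mathbb Z^{2n}\times\{0,1\}: x_0\in\{0,1\},\ x_i,\bar x_i\ge0,\ \sum_{i=1}^n(x_i+\bar x_i)\le l\}$. Crystal structure: $\tilde f_0b=(x_1+1,x_2,\dots,\bar x_1)$ if $x_1\ge\bar x_1$, $(x_1,\dots,\bar x_2,\bar x_1-1)$ if $x_1<\bar x_1$; for $1\le i\le n-1$, $\tilde f_ib$ replaces $(x_i,x_{i+1})$ by $(x_i-1,x_{i+1}+1)$ if $x_{i+1}\ge\bar x_{i+1}$, and $(\bar x_{i+1},\bar x_i)$ by $(\bar x_{i+1}-1,\bar x_i+1)$ if $x_{i+1}<\bar x_{i+1}$; $\tilde f_nb$ replaces $(x_n,x_0)$ by $(x_n-1,x_0+1)$ if $x_0=0$, and $(x_0,\bar x_n)$ by $(x_0-1,\bar x_n+1)$ if $x_0=1$; $\tilde e_ib=b'$ iff $\tilde f_ib'=b$; results outside $B$ mean $0$. With $s(b)=\sum_{i=1}^n(x_i+\bar x_i)$: $\varphi_0(b)=l-x_0-s(b)+2(\bar x_1-x_1)_+$, $\varepsilon_0(b)=l-x_0-s(b)+2(x_1-\bar x_1)_+$; $\varphi_i(b)=x_i+(\bar x_{i+1}-x_{i+1})_+$, $\varepsilon_i(b)=\bar x_i+(x_{i+1}-\bar x_{i+1})_+$ ($1\le i\le n-1$); $\varphi_n(b)=2x_n+x_0$, $\varepsilon_n(b)=2\bar x_n+x_0$.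 For $\lambda=l\Lambda_0$: $\lambda_j=l\Lambda_0$ and $\overline b_j=(0,\dots,0)$ for all $j$; $\langle\lambda_j,h_i\rangle$ is the coefficient of $\Lambda_i$ in $\lambda_j$. Given $d$, $i^{(j)}_a$: $B^{(j)}_0=\{\overline b_j\}$, $B^{(j)}_a=\bigcup_{n\ge0}\tilde f_{i^{(j)}_a}^nB^{(j)}_{a-1}\setminus\{0\}$; $b^{(j)}_0=\overline b_j$, $b^{(j)}_a=\tilde f_{i^{(j)}_a}^{\varphi_{i^{(j)}_a}(b^{(j)}_{a-1})}b^{(j)}_{a-1}$. *)

From mathcomp Require Import all_boot all_algebra.
Set Implicit Arguments. Unset Strict Implicit. Unset Printing Implicit Defensive.
Import GRing.Theory Num.Theory.

(* An element b = (x_1,...,x_n, x_0, xbar_n, ..., xbar_1).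
   ex i = x_i, exb i = xbar_i for 1 <= i <= n (other indices are required
   to be 0 for elements of B); ex0 = x_0. *)
Record elt := Elt { ex : nat -> nat; ex0 : nat; exb : nat -> nat }.

Definition zerof : nat -> nat := fun _ => 0.
Definition zeroE : elt := Elt zerof 0 zerof.

Definition upd (f : nat -> nat) (k v : nat) : nat -> nat :=
  fun i => if i == k then v else f i.

Definition sB (n : nat) (b : elt) : nat :=
  \sum_(1 <= i < n.+1) (ex b i + exb b i).

Definition inB (n l : nat) (b : elt) : Prop :=
  [/\ ex0 b <= 1,
      (forall i, (i == 0) || (n < i) -> ex b i = 0 /\ exb b i = 0)
    & ex0 b + sB n b <= l].

(* Raw action of f_i : (decremented coordinate was >= 1, new element). *)
Definition f_raw (n : nat) (i : nat) (b : elt) : bool * elt :=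
  let x := ex b in let x0 := ex0 b in let xb := exb b in
  if i == 0 then
    (if xb 1 <= x 1 then (true, Elt (upd x 1 (x 1).+1) x0 xb)
     else (0 < xb 1, Elt x x0 (upd xb 1 (xb 1).-1)))
  else if i < n then
    (if xb i.+1 <= x i.+1 then
       (0 < x i, Elt (upd (upd x i (x i).-1) i.+1 (x i.+1).+1) x0 xb)
     else
       (0 < xb i.+1, Elt x x0 (upd (upd xb i.+1 (xb i.+1).-1) i (xb i).+1)))
  else if i == n then
    (if x0 == 0 then (0 < x n, Elt (upd x n (x n).-1) x0.+1 xb)
     else (0 < x0, Elt x x0.-1 (upd xb n (xb n).+1)))
  else (false, b).

(* \tilde f_i : None stands for 0 (result outside B). *)
Definition ft (n l i : nat) (b : elt) : option elt :=
  let (ok, b') := f_raw n i b in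
  if ok && (ex0 b' <= 1) && (ex0 b' + sB n b' <= l) then Some b' else None.

Fixpoint fpow (n l i k : nat) (b : elt) : option elt :=
  match k with
  | 0 => Some b
  | k'.+1 => match fpow n l i k' b with Some c => ft n l i c | None => None end
  end.

Definition pos (z : int) : int := if (0 <= z)%R then z else 0%R.

Definition phi (n l i : nat) (b : elt) : int :=
  if i == 0 then
    (Posz l - Posz (ex0 b) - Posz (sB n b) + 2 * pos (Posz (exb b 1) - Posz (ex b 1)))%R
  else if i < n then
    (Posz (ex b i) + pos (Posz (exb b i.+1) - Posz (ex b i.+1)))%R
  else if i == n then Posz (2 * ex b n + ex0 b)
  else 0%R.

Definition eps (n l i : nat) (b : elt) : int :=
  if i == 0 then
    (Posz l - Posz (ex0 b) - Posz (sB n b) + 2 * pos (Posz (ex b 1) - Posz (exb b 1)))%R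
  else if i < n then
    (Posz (exb b i) + pos (Posz (ex b i.+1) - Posz (exb b i.+1)))%R
  else if i == n then Posz (2 * exb b n + ex0 b)
  else 0%R.

(* lambda_j = l Lambda_0 for all j : <lambda_j, h_i> *)
Definition lamh (l j i : nat) : nat := if i == 0 then l else 0.

Definition dd (n : nat) : nat := 2 * n.
Definition idx (n j a : nat) : nat := if a <= n.+1 then a - 1 else (2 * n).+1 - a.
Definition inext (n j a : nat) : nat :=
  if a == dd n then idx n j.+1 1 else idx n j a.+1.

Fixpoint Bset (n l j a : nat) : elt -> Prop :=
  match a with
  | 0 => fun b => b = zeroE
  | a'.+1 => fun b => exists2 c, Bset n l j a' c &
               exists k, fpow n l (idx n j a'.+1) k c = Some b
  end.

Definition toNat (z : int) : nat := match z with Posz m => m | Negz _ => 0 end.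

(* b^{(j)}_a (None would mean 0) *)
Fixpoint bb (n l j a : nat) : option elt :=
  match a with
  | 0 => Some zeroE
  | a'.+1 => match bb n l j a' with
             | Some c => fpow n l (idx n j a'.+1) (toNat (phi n l (idx n j a'.+1) c)) c
             | None => None
             end
  end.

(* Each f_i changes only
   the coordinates indexed i and i+1 (and x_0 when i = n), so f_0 creates x_1,
   f_1, ..., f_{n-1} shift mass up to x_n, f_n carries it through x_0 into
   xbar_n (two applications per unit), and f_{n-1}, ..., f_1 shift it down to
   xbar_1; this closure argument, together with an explicit preimage for every
   element of the predicted support, yields the descriptions of B^{(j)}_a and
   (II).  Along the path of maximal strings the whole level l sits on a single
   coordinate, where phi and epsilon are read off directly, giving (III) and
   (IV'). *)

From mathcomp Require Import all_boot all_algebra zify.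
From Stdlib Require Import FunctionalExtensionality.
Import GRing.Theory Num.Theory.

Lemma elt_ext (b c : elt) :
  ex b =1 ex c -> ex0 b = ex0 c -> exb b =1 exb c -> b = c.
Proof.
by case: b c => x x0 xb [y y0 yb] /= /functional_extensionality -> ->
  /functional_extensionality ->.
Qed.

Lemma upd_same f k v : upd f k v k = v.
Proof. by rewrite /upd eqxx. Qed.

Lemma upd_diff f k v j : j != k -> upd f k v j = f j.
Proof. by rewrite /upd => /negbTE ->. Qed.

Lemma upd_upd f k v v' : upd (upd f k v) k v' = upd f k v'.
Proof. by apply: functional_extensionality => j; rewrite /upd; case: eqP. Qed.

Lemma upd_id f k : upd f k (f k) = f.
Proof. by apply: functional_extensionality => j; rewrite /upd; case: eqP => [->|]. Qed.

Ltac upd_lia := simpl; cbv [upd zerof]; repeat case: eqP => ?; subst; lia.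
Ltac elt_lia := apply: elt_ext => [j||j] /=; upd_lia.

Lemma sum_upd (F : nat -> nat) a b k v : a <= k < b ->
  \sum_(a <= i < b) upd F k v i + F k = \sum_(a <= i < b) F i + v.
Proof.
move=> /andP[ak kb].
rewrite (big_cat_nat ak (ltnW kb)) [X in _ = X + _](big_cat_nat ak (ltnW kb)) /=.
rewrite !(big_ltn kb) upd_same.
have eq_lo : \sum_(a <= i < k) upd F k v i = \sum_(a <= i < k) F i.
  by apply: eq_big_nat => i /andP[_ ik]; rewrite upd_diff // ltn_eqF.
have eq_hi : \sum_(k.+1 <= i < b) upd F k v i = \sum_(k.+1 <= i < b) F i.
  by apply: eq_big_nat => i /andP[ki _]; rewrite upd_diff // gtn_eqF.
by rewrite eq_lo eq_hi; lia.
Qed.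

Lemma pos_subz (a b : nat) : pos (Posz a - Posz b) = Posz (a - b).
Proof. by rewrite /pos; case: ifP; lia. Qed.

Section Crystal.

Variables n l : nat.
Hypothesis n_gt0 : 0 < n.

Lemma sB_upd_ex x x0 xb k v : 1 <= k <= n ->
  sB n (Elt (upd x k v) x0 xb) + x k = sB n (Elt x x0 xb) + v.
Proof.
move=> hk; rewrite /sB !big_split /=.
by have := @sum_upd x 1 n.+1 k v (ltac:(lia)); lia.
Qed.

Lemma sB_upd_exb x x0 xb k v : 1 <= k <= n ->
  sB n (Elt x x0 (upd xb k v)) + xb k = sB n (Elt x x0 xb) + v.
Proof.
move=> hk; rewrite /sB !big_split /=.
by have := @sum_upd xb 1 n.+1 k v (ltac:(lia)); lia.
Qed.

Lemma sB_upd_ex2 x x0 xb i i' v v' : 1 <= i <= n -> 1 <= i' <= n -> i != i' ->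
  sB n (Elt (upd (upd x i v) i' v') x0 xb) + x i + x i' = sB n (Elt x x0 xb) + v + v'.
Proof.
move=> hi hi' ii'; have := sB_upd_ex (upd x i v) x0 xb i' v' hi'.
by rewrite upd_diff 1?eq_sym //; have := sB_upd_ex x x0 xb i v hi; lia.
Qed.

Lemma sB_upd_exb2 x x0 xb i i' v v' : 1 <= i <= n -> 1 <= i' <= n -> i != i' ->
  sB n (Elt x x0 (upd (upd xb i v) i' v')) + xb i + xb i' = sB n (Elt x x0 xb) + v + v'.
Proof.
move=> hi hi' ii'; have := sB_upd_exb x x0 (upd xb i v) i' v' hi'.
by rewrite upd_diff 1?eq_sym //; have := sB_upd_exb x x0 xb i v hi; lia.
Qed.

Lemma sB_upd_ex_exb x x0 x0' xb k v v' : 1 <= k <= n ->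
  sB n (Elt (upd x k v) x0 (upd xb k v')) + x k + xb k = sB n (Elt x x0' xb) + v + v'.
Proof.
rewrite -[sB n (Elt x x0' xb)]/(sB n (Elt x x0 xb)).
by move=> hk; have := sB_upd_exb (upd x k v) x0 xb k v' hk; have := sB_upd_ex x x0 xb k v hk; lia.
Qed.

Lemma sB_zeroE : sB n zeroE = 0.
Proof. by rewrite /sB big1. Qed.

Lemma ex_le_sB b k : 1 <= k <= n -> ex b k <= sB n b.
Proof. by case: b => x x0 xb /= hk; have := sB_upd_ex x x0 xb k 0 hk; lia. Qed.

Lemma f_raw0_ex b : exb b 1 <= ex b 1 ->
  f_raw n 0 b = (true, Elt (upd (ex b) 1 (ex b 1).+1) (ex0 b) (exb b)).
Proof. by move=> h; rewrite /f_raw /= h. Qed.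

Lemma f_raw0_exb b : ex b 1 < exb b 1 ->
  f_raw n 0 b = (0 < exb b 1, Elt (ex b) (ex0 b) (upd (exb b) 1 (exb b 1).-1)).
Proof. by move=> h; rewrite /f_raw /= leqNgt h. Qed.

Lemma f_raw_ex i b : 0 < i < n -> exb b i.+1 <= ex b i.+1 ->
  f_raw n i b =
  (0 < ex b i, Elt (upd (upd (ex b) i (ex b i).-1) i.+1 (ex b i.+1).+1) (ex0 b) (exb b)).
Proof. by move=> /andP[/gtn_eqF i0 in_] h; rewrite /f_raw /= i0 in_ h. Qed.

Lemma f_raw_exb i b : 0 < i < n -> ex b i.+1 < exb b i.+1 ->
  f_raw n i b = (0 < exb b i.+1,
    Elt (ex b) (ex0 b) (upd (upd (exb b) i.+1 (exb b i.+1).-1) i (exb b i).+1)).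
Proof. by move=> /andP[/gtn_eqF i0 in_] h; rewrite /f_raw /= i0 in_ leqNgt h. Qed.

Lemma f_rawn_ex b : ex0 b = 0 ->
  f_raw n n b = (0 < ex b n, Elt (upd (ex b) n (ex b n).-1) 1 (exb b)).
Proof. by move=> h; rewrite /f_raw /= gtn_eqF // ltnn eqxx h. Qed.

Lemma f_rawn_exb b : ex0 b = 1 ->
  f_raw n n b = (true, Elt (ex b) 0 (upd (exb b) n (exb b n).+1)).
Proof. by move=> h; rewrite /f_raw /= gtn_eqF // ltnn eqxx h. Qed.

Lemma ft_Some i b b' : (f_raw n i b).1 -> (f_raw n i b).2 = b' ->
  ex0 b' <= 1 -> ex0 b' + sB n b' <= l -> ft n l i b = Some b'.
Proof. by rewrite /ft; case: f_raw => [[] c] //= _ <- -> ->. Qed.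

Lemma ftP i b b' : ft n l i b = Some b' ->
  [/\ f_raw n i b = (true, b'), ex0 b' <= 1 & ex0 b' + sB n b' <= l].
Proof. by rewrite /ft; case: f_raw => [[] c] //=; case: ifP => // /andP[? ?] [<-]. Qed.

Lemma fpow_add i k k' c :
  fpow n l i (k + k') c = obind (fpow n l i k') (fpow n l i k c).
Proof. by elim: k' => [|k' IH]; rewrite ?addn0 ?addnS /= ?IH; case: fpow. Qed.

Lemma fpow_chain i m (g : nat -> elt) :
  (forall k, k < m -> ft n l i (g k) = Some (g k.+1)) -> fpow n l i m (g 0) = Some (g m).
Proof.
elim: m => [//|m IH] step /=.
by rewrite IH => [|k /ltnW]; [exact: step | exact: step].
Qed.

Lemma fpow0_ex k x x0 xb : xb 1 <= x 1 -> x0 <= 1 -> x0 + sB n (Elt x x0 xb) + k <= l ->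
  fpow n l 0 k (Elt x x0 xb) = Some (Elt (upd x 1 (x 1 + k)) x0 xb).
Proof.
move=> hx hx0 hs; have := @fpow_chain 0 k (fun m => Elt (upd x 1 (x 1 + m)) x0 xb).
rewrite /= addn0 upd_id => -> // m mk.
have hsm := sB_upd_ex x x0 xb 1 (x 1 + m.+1) (ltac:(lia)).
by apply: ft_Some => /=; rewrite ?f_raw0_ex /= ?upd_same ?upd_upd -?addnS //; lia.
Qed.

Lemma fpow0_exb k x x0 xb : x 1 + k <= xb 1 -> x0 <= 1 -> x0 + sB n (Elt x x0 xb) <= l ->
  fpow n l 0 k (Elt x x0 xb) = Some (Elt x x0 (upd xb 1 (xb 1 - k))).
Proof.
move=> hx hx0 hs; have := @fpow_chain 0 k (fun m => Elt x x0 (upd xb 1 (xb 1 - m))).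
rewrite /= subn0 upd_id => -> // m mk.
have hsm := sB_upd_exb x x0 xb 1 (xb 1 - m.+1) (ltac:(lia)).
by apply: ft_Some => /=; rewrite ?f_raw0_exb /= ?upd_same ?upd_upd -?subnS //; lia.
Qed.

Lemma fpow_ex i k x x0 xb : 0 < i < n -> xb i.+1 <= x i.+1 -> k <= x i ->
  x0 <= 1 -> x0 + sB n (Elt x x0 xb) <= l ->
  fpow n l i k (Elt x x0 xb) =
  Some (Elt (upd (upd x i (x i - k)) i.+1 (x i.+1 + k)) x0 xb).
Proof.
move=> hi hx hk hx0 hs.
have := @fpow_chain i k (fun m => Elt (upd (upd x i (x i - m)) i.+1 (x i.+1 + m)) x0 xb).
rewrite /= subn0 addn0 !upd_id => -> // m mk.
have hsm := sB_upd_ex2 x x0 xb i i.+1 (x i - m.+1) (x i.+1 + m.+1)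
  (ltac:(lia)) (ltac:(lia)) (ltac:(lia)).
by apply: ft_Some => /=; rewrite ?f_raw_ex /=; lia || elt_lia || upd_lia.
Qed.

Lemma fpow_exb i k x x0 xb : 0 < i < n -> x i.+1 + k <= xb i.+1 ->
  x0 <= 1 -> x0 + sB n (Elt x x0 xb) <= l ->
  fpow n l i k (Elt x x0 xb) =
  Some (Elt x x0 (upd (upd xb i.+1 (xb i.+1 - k)) i (xb i + k))).
Proof.
move=> hi hx hx0 hs.
have := @fpow_chain i k (fun m => Elt x x0 (upd (upd xb i.+1 (xb i.+1 - m)) i (xb i + m))).
rewrite /= subn0 addn0 !upd_id => -> // m mk.
have hsm := sB_upd_exb2 x x0 xb i.+1 i (xb i.+1 - m.+1) (xb i + m.+1)
  (ltac:(lia)) (ltac:(lia)) (ltac:(lia)).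
by apply: ft_Some => /=; rewrite ?f_raw_exb /=; lia || elt_lia || upd_lia.
Qed.

Lemma fpown k x xb : k <= (x n).*2 -> sB n (Elt x 0 xb) <= l ->
  fpow n l n k (Elt x 0 xb) =
  Some (Elt (upd x n (x n - uphalf k)) (odd k) (upd xb n (xb n + k./2))).
Proof.
move=> hk hs.
have := @fpow_chain n k (fun m => Elt (upd x n (x n - uphalf m)) (odd m) (upd xb n (xb n + m./2))).
rewrite /= subn0 addn0 !upd_id => -> // m mk.
have hsm := sB_upd_ex_exb x (odd m.+1) 0 xb n (x n - uphalf m.+1) (xb n + m.+1./2) (ltac:(lia)).
have [om|om] := boolP (odd m); move: hsm; rewrite /= ?om ?(negbTE om) /= => hsm.
- by apply: ft_Some => /=; rewrite ?f_rawn_exb /= ?om; lia || elt_lia || upd_lia.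
- by apply: ft_Some => /=; rewrite ?f_rawn_ex /= ?(negbTE om); lia || elt_lia || upd_lia.
Qed.

Lemma ft_frame i c b j : ft n l i c = Some b ->
  j = 0 \/ n < j \/ (j != i /\ j != i.+1) -> ex b j = ex c j /\ exb b j = exb c j.
Proof.
case/ftP=> + _ _ hj; case: c => x x0 xb.
by rewrite /f_raw /=; repeat case: ifP => ?; move/(congr1 snd) => /= <-; split; upd_lia.
Qed.

Lemma ft_ex_branch i c b : i < n -> exb c i.+1 <= ex c i.+1 -> ft n l i c = Some b ->
  ex0 b = ex0 c /\ exb b = exb c.
Proof.
move=> hi h /ftP[+ _ _]; case: (posnP i) h => [->|i0] h.
  by rewrite f_raw0_ex // => /(congr1 snd) /= <-.
by rewrite f_raw_ex ?i0 // => /(congr1 snd) /= <-.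
Qed.

Lemma fpow_closed i (Q : elt -> Prop) k c b :
  (forall c b, Q c -> ft n l i c = Some b -> Q b) ->
  Q c -> fpow n l i k c = Some b -> Q b.
Proof.
move=> hQ Qc; elim: k b => [b [<-] //|k IH b] /=.
by case E: fpow => [d|//]; apply: hQ; exact: IH.
Qed.

Lemma inB_zeroE : inB n l zeroE.
Proof. by split => //=; rewrite sB_zeroE. Qed.

Definition Bx a b :=
  inB n l b /\ (forall i, a < i -> ex b i = 0) /\ ex0 b = 0 /\ (forall i, exb b i = 0).

Definition Bxb a b := inB n l b /\ (forall i, i < n - a + 1 -> exb b i = 0).

Lemma Bx0 b : Bx 0 b <-> b = zeroE.
Proof.
split=> [[[_ hz _] [hx [h0 hxb]]] | ->]; last by split; [exact: inB_zeroE | split].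
apply: elt_ext => // i; case: (posnP i) => [->|/hx //]; by case: (hz 0).
Qed.

Lemma Bx_ft a c b : a < n -> Bx a.+1 c -> ft n l a c = Some b -> Bx a.+1 b.
Proof.
move=> ha [[_ hz _] [hx [hx0 hxb]]] hf.
have [_ hb0 hbs] := ftP _ _ _ hf.
have [eb0 ebxb] := ft_ex_branch a c b ha (ltac:(by rewrite hxb)) hf.
split; [split|split; [|split]] => //.
- move=> i hi; have [-> ->] := ft_frame _ _ _ i hf (ltac:(move: hi => /orP; lia)); exact: hz.
- by move=> i hi; have [-> _] := ft_frame _ _ _ i hf (ltac:(lia)); exact: hx.
- by rewrite eb0.
- by move=> i; rewrite ebxb.
Qed.

Lemma Bxb_ft a c b : 0 < a <= n -> Bxb a c -> ft n l (n - a + 1) c = Some b -> Bxb a b.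
Proof.
move=> ha [[_ hz _] hxb] hf.
have [_ hb0 hbs] := ftP _ _ _ hf.
split; [split|] => //.
- move=> i hi; have [-> ->] := ft_frame _ _ _ i hf (ltac:(move: hi => /orP; lia)); exact: hz.
- by move=> i hi; have [_ ->] := ft_frame _ _ _ i hf (ltac:(lia)); exact: hxb.
Qed.

Lemma Bx_reach a b : a < n -> Bx a.+1 b ->
  exists2 c, Bx a c & exists k, fpow n l a k c = Some b.
Proof.
case: b => x x0 xb ha [[_ hz hs] [/= hx [/= x00 hxb]]]; subst x0.
have {hxb} exb0 : xb = zerof by apply: functional_extensionality.
subst xb; have x_0 : x 0 = 0 by case: (hz 0).
case: (posnP a) => [a0|a_gt0].
  subst a; exists zeroE; first exact/Bx0.
  have := ex_le_sB (Elt x 0 zerof) 1 (ltac:(lia)); rewrite /= => x1_le.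
  exists (x 1); rewrite /zeroE fpow0_ex //= ?sB_zeroE; last by lia.
  congr Some; apply: elt_ext => // i /=.
  by case: (posnP i) => [->|i_gt0]; [rewrite x_0 | have := hx i; upd_lia].
pose c := Elt (upd (upd x a (x a + x a.+1)) a.+1 0) 0 zerof.
have hsc := sB_upd_ex2 x 0 zerof a a.+1 (x a + x a.+1) 0 (ltac:(lia)) (ltac:(lia)) (ltac:(lia)).
exists c.
  split; [split|split; [|split]] => //=.
  - by move=> i hi; move: (hz i hi) => /= [hzi _]; split => //; upd_lia.
  - by rewrite /c; lia.
  - by move=> i hi; have := hx i; upd_lia.
exists (x a.+1); rewrite fpow_ex //=; try upd_lia; last by rewrite /c in hsc; lia.
by congr Some; apply: elt_ext => // i /=; upd_lia.
Qed.

Lemma Bxb1_reach b : Bxb 1 b -> exists2 c, Bx n c & exists k, fpow n l n k c = Some b.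
Proof.
case: b => x x0 xb [[/= hx0 hz hs] /= hxb].
pose c := Elt (upd x n (x n + xb n + x0)) 0 (upd xb n 0).
have hsc := sB_upd_ex_exb x 0 x0 xb n (x n + xb n + x0) 0 (ltac:(lia)).
exists c.
  split; [split|split; [|split]] => //=.
  - by move=> i hi; move: (hz i hi) => /= [hzi hzbi]; split; upd_lia.
  - by rewrite /c; lia.
  - by move=> i hi; move: (hz i (ltac:(lia))) => /= [hzi _]; upd_lia.
  - by move=> i; have := hxb i; move: (hz i); rewrite /=; upd_lia.
exists ((xb n).*2 + x0); rewrite fpown /=; first last.
- by rewrite /c in hsc; lia.
- by upd_lia.
by congr Some; apply: elt_ext => [i||i] /=; upd_lia.
Qed.

(* The preimage moves the excess t = (x_{i+1} - xbar_{i+1})_+ back to x_i and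
   xbar_i onto xbar_{i+1}; f_i then first lowers xbar_{i+1} for xbar_i steps and
   afterwards shifts t from x_i to x_{i+1}. *)
Lemma exb_reach i b : 0 < i < n -> inB n l b -> (forall j, j < i -> exb b j = 0) ->
  exists2 c, inB n l c /\ (forall j, j <= i -> exb c j = 0) &
    exists k, fpow n l i k c = Some b.
Proof.
case: b => x x0 xb hi [/= hx0 hz hs] /= hxb.
move def_t : (x i.+1 - xb i.+1) => t.
pose y := upd (upd x i (x i + t)) i.+1 (x i.+1 - t).
pose yb := upd (upd xb i.+1 (xb i.+1 + xb i)) i 0.
have s_y := sB_upd_ex2 x x0 xb i i.+1 (x i + t) (x i.+1 - t) (ltac:(lia)) (ltac:(lia)) (ltac:(lia)).
have s_yb := sB_upd_exb2 y x0 xb i.+1 i (xb i.+1 + xb i) 0 (ltac:(lia)) (ltac:(lia)) (ltac:(lia)).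
rewrite -/y in s_y; rewrite -/yb in s_yb.
have c_mid : fpow n l i (xb i) (Elt y x0 yb) = Some (Elt y x0 xb).
  rewrite fpow_exb //=; [|by rewrite /y /yb; upd_lia | lia].
  by congr Some; apply: elt_ext => // j; rewrite /yb; upd_lia.
have mid_b : fpow n l i t (Elt y x0 xb) = Some (Elt x x0 xb).
  case: (leqP (xb i.+1) (x i.+1)) => h; last first.
    have -> : t = 0 by lia.
    by congr Some; apply: elt_ext => // j; rewrite /y; upd_lia.
  rewrite fpow_ex //=; [|by rewrite /y; upd_lia | by rewrite /y; upd_lia | lia].
  by congr Some; apply: elt_ext => // j; rewrite /y; upd_lia.
exists (Elt y x0 yb).
  split; [split|] => //=.
  - by move=> j hj; move: (hz j hj) => /= [hzj hzbj]; rewrite /y /yb; split; upd_lia.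
  - lia.
  - by move=> j hj; have := hxb j; rewrite /yb; upd_lia.
by exists (xb i + t); rewrite fpow_add c_mid.
Qed.

Lemma Bx_succ a c : Bx a c -> Bx a.+1 c.
Proof. by case=> hc [hx h]; split; [|split=> // i hi; apply: hx; lia]. Qed.

Lemma Bxb_succ a c : Bxb a c -> Bxb a.+1 c.
Proof. by case=> hc hxb; split=> // i hi; apply: hxb; lia. Qed.

Lemma Bx_Bxb1 c : Bx n c -> Bxb 1 c.
Proof. by case=> hc [_ [_ hxb]]. Qed.

Lemma idxS_le j a : a <= n -> idx n j a.+1 = a.
Proof. by move=> ha; rewrite /idx ifT; lia. Qed.

Lemma idx_addnS j a : 0 < a < n -> idx n j (n + a).+1 = n - a.
Proof. by move=> ha; rewrite /idx ifF; lia. Qed.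

Lemma Bset_succ j a (P Q : elt -> Prop) :
  (forall c, Bset n l j a c <-> P c) ->
  (forall c k b, P c -> fpow n l (idx n j a.+1) k c = Some b -> Q b) ->
  (forall b, Q b -> exists2 c, P c & exists k, fpow n l (idx n j a.+1) k c = Some b) ->
  forall b, Bset n l j a.+1 b <-> Q b.
Proof.
move=> HP closed reach b.
split=> [[c /HP Pc [k hk]] | /reach[c /HP Pc hk]]; [exact: closed hk | by exists c].
Qed.

Lemma Bset_Bx j a b : a <= n -> Bset n l j a b <-> Bx a b.
Proof.
elim: a b => [|a IH] b ha; first exact: iff_sym (Bx0 b).
apply: (@Bset_succ j a (Bx a)) => [c | c k b' /Bx_succ Pc | b'].
- exact: IH (ltnW ha).
- rewrite idxS_le 1?ltnW //; apply: fpow_closed Pc => c' b''; exact: Bx_ft.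
- rewrite idxS_le 1?ltnW //; exact: Bx_reach.
Qed.

Lemma Bset_Bxb j a b : 0 < a <= n -> Bset n l j (n + a) b <-> Bxb a b.
Proof.
elim: a b => [//|a IH] b ha; rewrite addnS.
have [a0|a_gt0] := posnP a.
  subst a; rewrite addn0.
  apply: (@Bset_succ j n (Bx n)) => [c | c k b' /Bx_Bxb1 Pc | b'].
  - exact: Bset_Bx.
  - rewrite idxS_le //; apply: fpow_closed Pc => c' b''.
    by move=> hc hf; apply: (Bxb_ft 1 c') => //; rewrite subnK.
  - by rewrite idxS_le //; exact: Bxb1_reach.
apply: (@Bset_succ j (n + a) (Bxb a)) => [c | c k b' /Bxb_succ Pc | b' [hb hxb]].
- by apply: IH; lia.
- rewrite idx_addnS; last by lia.
  apply: fpow_closed Pc => c' b''; rewrite (_ : n - a = n - a.+1 + 1); last by lia.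
  exact: Bxb_ft.
rewrite idx_addnS; last by lia.
have [c [hc hxbc] hk] := exb_reach (n - a) b' (ltac:(lia)) hb (fun j hj => hxb j (ltac:(lia))).
by exists c => //; split=> // i hi; apply: hxbc; lia.
Qed.

Lemma Bxb_n b : Bxb n b <-> inB n l b.
Proof.
split=> [[]//|hb]; split=> // i; rewrite subnn => /[!ltnS] /[!leqn0] /eqP ->.
by case: hb => _ /(_ 0 isT) [].
Qed.

Definition l_ex a := Elt (upd zerof a l) 0 zerof.
Definition l_exb k := Elt zerof 0 (upd zerof k l).

Lemma sB_l_ex a : 0 < a <= n -> sB n (l_ex a) = l.
Proof.
move=> ha; have := sB_upd_ex zerof 0 zerof a l ha; have := sB_zeroE.
by rewrite /zeroE /l_ex /zerof /=; lia.
Qed.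

Lemma sB_l_exb k : 0 < k <= n -> sB n (l_exb k) = l.
Proof.
move=> hk; have := sB_upd_exb zerof 0 zerof k l hk; have := sB_zeroE.
by rewrite /zeroE /l_exb /zerof /=; lia.
Qed.

Ltac phi_lia := rewrite /phi /eps ?pos_subz; cbv [upd zerof zeroE l_ex l_exb ex exb ex0];
  repeat case: ifP => ?; lia.

Lemma phi_eps_zeroE : phi n l 0 zeroE = l /\ eps n l 0 zeroE = l.
Proof. by rewrite /phi /eps sB_zeroE !pos_subz /=; split; phi_lia. Qed.

Lemma phi_eps_l_ex i : 0 < i < n -> phi n l i (l_ex i) = l /\ eps n l i (l_ex i) = 0%R.
Proof. by move=> hi; split; phi_lia. Qed.

Lemma phi_eps_l_exn : phi n l n (l_ex n) = (2 * l)%N /\ eps n l n (l_ex n) = 0%R.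
Proof. by split; phi_lia. Qed.

Lemma phi_eps_l_exb i : 0 < i < n ->
  phi n l i (l_exb i.+1) = l /\ eps n l i (l_exb i.+1) = 0%R.
Proof. by move=> hi; split; phi_lia. Qed.

Lemma phi_eps_l_exb1 : phi n l 0 (l_exb 1) = (2 * l)%N /\ eps n l 0 (l_exb 1) = 0%R.
Proof. by rewrite /phi /eps sB_l_exb // !pos_subz /= upd_same /zerof; split; lia. Qed.

Lemma eps_ge0 i b : i != 0 -> (0 <= eps n l i b)%R.
Proof. by move=> /negbTE i0; rewrite /eps i0 !pos_subz; repeat case: ifP => ?; lia. Qed.

Lemma bb_l_ex j a : 0 < a <= n -> bb n l j a = Some (l_ex a).
Proof.
elim: a => [//|a IH] ha /=.
have [a0|a_gt0] := posnP a.
  subst a; rewrite /= idxS_le // (proj1 phi_eps_zeroE) /= fpow0_ex //=.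
  by have := sB_zeroE; rewrite /zeroE; lia.
rewrite IH; last by lia.
rewrite idxS_le 1?ltnW // (proj1 (phi_eps_l_ex a _)) /=; last by lia.
have := sB_l_ex a (ltac:(lia)); rewrite /l_ex => s_a.
rewrite fpow_ex //=; try by [lia | upd_lia].
by congr Some; apply: elt_ext => // i; upd_lia.
Qed.

Lemma bb_l_exb j a : 0 < a <= n -> bb n l j (n + a) = Some (l_exb (n - a + 1)).
Proof.
elim: a => [//|a IH] ha; rewrite addnS /=.
have [a0|a_gt0] := posnP a.
  subst a; rewrite addn0 (bb_l_ex j n (ltac:(lia))) idxS_le // (proj1 phi_eps_l_exn) /=.
  have := sB_l_ex n (ltac:(lia)); rewrite /l_ex => s_n.
  rewrite fpown ?s_n //=; try by [lia | upd_lia].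
  by congr Some; rewrite /l_exb; apply: elt_ext => [i||i] /=; upd_lia.
rewrite IH; last by lia.
rewrite idx_addnS; last by lia.
rewrite (_ : n - a + 1 = (n - a).+1); last by lia.
rewrite (proj1 (phi_eps_l_exb (n - a) _)) /=; last by lia.
have := sB_l_exb (n - a).+1 (ltac:(lia)); rewrite /l_exb => s_a.
rewrite fpow_exb //=; try by [lia | upd_lia].
by congr Some; apply: elt_ext => // i; upd_lia.
Qed.

Lemma lamh_le_eps j a b : 0 < a <= dd n -> Bset n l j a.-1 b ->
  (Posz (lamh l j (idx n j a)) <= eps n l (idx n j a) b)%R.
Proof.
move=> ha; case: (ltngtP a 1) => [|a_gt1|->]; first lia.
  move=> _; have i0 : idx n j a != 0 by rewrite /idx /dd in ha *; case: ifP; lia.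
  by rewrite /lamh (negbTE i0); exact: eps_ge0.
by move=> /= ->; rewrite /lamh /idx /= (proj2 phi_eps_zeroE).
Qed.

Lemma bb_wrap j : exists b, bb n l j (dd n) = Some b /\
  bb n l j.+1 0 = fpow n l (idx n j.+1 1) (lamh l j.+1 (idx n j.+1 1)) b.
Proof.
exists (l_exb 1); rewrite /dd mul2n -addnn (bb_l_exb j n (ltac:(lia))) subnn; split=> //.
have := sB_l_exb 1 (ltac:(lia)); rewrite /l_exb => s_1.
rewrite /lamh /idx /= fpow0_exb //=; try by [lia | upd_lia].
by congr Some; apply: elt_ext => // i; rewrite /zeroE; upd_lia.
Qed.

Hypothesis l_gt0 : 0 < l.

Lemma bb_inext j a : 0 < a <= dd n -> exists b, bb n l j a = Some b /\
  eps n l (inext n j a) b = 0%R /\ (0 < phi n l (inext n j a) b)%R.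
Proof.
rewrite /inext /dd => ha.
have [a_le|a_gt] := leqP a n.
  exists (l_ex a); rewrite (bb_l_ex j a (ltac:(lia))) ifF; last by lia.
  rewrite idxS_le //; split=> //.
  have [a_lt|a_n] := ltnP a n.
    by have [-> ->] := phi_eps_l_ex a (ltac:(lia)); split=> //; lia.
  have -> : a = n by lia.
  by have [-> ->] := phi_eps_l_exn; split=> //; lia.
have [a' def_a] : exists a', a = n + a' by exists (a - n); lia.
subst a; exists (l_exb (n - a' + 1)); rewrite bb_l_exb; last by lia.
split=> //; have [a'_lt|a'_n] := ltnP a' n.
  rewrite ifF; last by lia.
  rewrite idx_addnS; last by lia.
  rewrite (_ : n - a' + 1 = (n - a').+1); last by lia.
  by have [-> ->] := phi_eps_l_exb (n - a') (ltac:(lia)); split=> //; lia.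
have -> : a' = n by lia.
rewrite ifT; last by lia.
by rewrite /idx /= !subnn ?add0n; have [-> ->] := phi_eps_l_exb1; split=> //; lia.
Qed.

End Crystal.

Theorem mainTheorem7 (n l : nat) (hn : 2 <= n) (hl : 1 <= l) :
  (* (II) *)
  (forall j, 1 <= j -> forall b, Bset n l j (dd n) b <-> inB n l b) /\
  (* (III) *)
  (forall j a b, 1 <= j -> 1 <= a <= dd n -> Bset n l j a.-1 b ->
     (Posz (lamh l j (idx n j a)) <= eps n l (idx n j a) b)%R) /\
  (* (IV') *)
  (forall j a, 1 <= j -> 1 <= a <= dd n ->
     exists b, bb n l j a = Some b /\
       eps n l (inext n j a) b = 0%R /\ (0 < phi n l (inext n j a) b)%R) /\
  (forall j, 1 <= j ->
     exists b, bb n l j (dd n) = Some b /\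
       bb n l j.+1 0 = fpow n l (idx n j.+1 1) (lamh l j.+1 (idx n j.+1 1)) b) /\
  (* Moreover: description of B^{(j)}_a *)
  (forall j, 1 <= j -> forall b, Bset n l j 0 b <-> b = zeroE) /\
  (forall j a, 1 <= j -> 1 <= a <= n -> forall b,
     Bset n l j a b <->
     inB n l b /\ (forall i, a < i -> ex b i = 0) /\ ex0 b = 0 /\
       (forall i, exb b i = 0)) /\
  (forall j a, 1 <= j -> 1 <= a <= n.-1 -> forall b,
     Bset n l j (n + a) b <->
     inB n l b /\ (forall i, i < n - a + 1 -> exb b i = 0)) /\
  (* description of b^{(j)}_a *)
  (forall j, 1 <= j -> bb n l j 0 = Some zeroE) /\
  (forall j a, 1 <= j -> 1 <= a <= n ->
     bb n l j a = Some (Elt (upd zerof a l) 0 zerof) /\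
     bb n l j (n + a) = Some (Elt zerof 0 (upd zerof (n - a + 1) l))).
Proof.
have n_gt0 : 0 < n by lia.
have dd_n : dd n = n + n by rewrite /dd mul2n addnn.
split; [|split; [|split; [|split; [|split; [|split; [|split; [|split]]]]]]].
- by move=> j _ b; rewrite dd_n Bset_Bxb ?Bxb_n // leqnn andbT.
- by move=> j a b _; exact: lamh_le_eps.
- by move=> j a _; exact: bb_inext.
- by move=> j _; exact: bb_wrap.
- by [].
- by move=> j a _ ha b; apply: Bset_Bx => //; lia.
- by move=> j a _ ha b; apply: Bset_Bxb => //; lia.
- by [].
- by move=> j a _ ha; rewrite bb_l_ex // bb_l_exb.
Qed.
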